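(* Let $\delta>0$, $\beta\ge1$ and let $k\ge3$ be an integer. For integers $n\ge k+1$ define \[\Delta_k^n=\big(n^\beta-(n-k)^\beta-2\big)^{-\delta}-\big((n+1)^\beta-(n-k)^\beta\big)^{-\delta}.\] Then $n\mapsto\Delta_k^n$ is non-increasing on $\{n\in\mathbb{N}:n\ge k+1\}$. *)

From Stdlib Require Import Reals.
Open Scope R_scope.

(* Delta_k^n = (n^beta - (n-k)^beta - 2)^(-delta) - ((n+1)^beta - (n-k)^beta)^(-delta).
   For n >= k+1, k >= 3, beta >= 1 all bases are positive, so Rpower is the
   usual real power. *)
Definition Delta_kn (delta beta : R) (k n : nat) : R :=
  Rpower (Rpower (INR n) beta - Rpower (INR n - INR k) beta - 2) (- delta)
  - Rpower (Rpower (INR n + 1) beta - Rpower (INR n - INR k) beta) (- delta).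

(* Write [A x = x^β - (x-K)^β - 2] and [B x = (x+1)^β - (x-K)^β], so that
   [Δ = A^-δ - B^-δ] and [0 < A < B] for [x >= K + 1].  The derivative
   [-δ (A' A^(-δ-1) - B' B^(-δ-1))] is nonpositive as soon as
   [B'/B <= A'/A], since also [B^-δ <= A^-δ].  Writing [X, U, Y] for the
   [(β-1)]-th powers of [x, x-K, x+1], the inequality [A B' <= A' B]
   reduces, after clearing denominators, to the chord inequality for the
   convex function [z ↦ z^(1-β)] at the points [x-K < x < x+1]. *)

From Stdlib Require Import Reals Lra Lia.
Open Scope R_scope.

Lemma Rpower_pos (x y : R) : 0 < Rpower x y.
Proof. unfold Rpower; apply exp_pos. Qed.

Lemma Rpower_pred_mul (z b : R) : 0 < z -> Rpower z (b - 1) * z = Rpower z b.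
Proof.
  intros Hz. rewrite <- (Rpower_1 z) at 2 by exact Hz.
  rewrite <- Rpower_plus. f_equal; ring.
Qed.

Lemma Rpower_opp_antitone (g a b : R) :
  0 <= g -> 0 < a <= b -> Rpower b (- g) <= Rpower a (- g).
Proof.
  intros Hg Hab. rewrite !Rpower_Ropp.
  apply Rinv_le_contravar; [apply Rpower_pos|].
  apply Rle_Rpower_l; lra.
Qed.

Lemma derivable_pt_lim_Rpower_comp (f : R -> R) (x a l : R) :
  derivable_pt_lim f x l -> 0 < f x ->
  derivable_pt_lim (fun t => Rpower (f t) a) x (a * Rpower (f x) (a - 1) * l).
Proof.
  intros Hf Hpos.
  apply (derivable_pt_lim_comp f (fun t => Rpower t a)); [exact Hf|].
  now apply derivable_pt_lim_power.
Qed.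

Lemma antitone_of_derive_nonpos (f f' : R -> R) (a x y : R) :
  (forall c, a <= c -> derivable_pt_lim f c (f' c)) ->
  (forall c, a <= c -> f' c <= 0) ->
  a <= x <= y -> f y <= f x.
Proof.
  intros Hd Hneg Hxy.
  destruct (Rle_lt_or_eq_dec x y ltac:(lra)) as [Hlt|<-]; [|lra].
  destruct (MVT_cor2 f f' x y Hlt) as [c [Hmvt Hc]].
  { intros c Hc. apply Hd; lra. }
  pose proof (Hneg c ltac:(lra)). nra.
Qed.

Lemma chord_of_derive_nondecreasing (f f' : R -> R) (u x y : R) :
  (forall c, u <= c <= y -> derivable_pt_lim f c (f' c)) ->
  (forall a b, u < a -> a <= b -> b < y -> f' a <= f' b) ->
  u < x < y ->
  f x * (y - u) <= (y - x) * f u + (x - u) * f y.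
Proof.
  intros Hd Hmono Hx.
  destruct (MVT_cor2 f f' u x ltac:(lra)) as [c1 [E1 H1]].
  { intros c Hc. apply Hd; lra. }
  destruct (MVT_cor2 f f' x y ltac:(lra)) as [c2 [E2 H2]].
  { intros c Hc. apply Hd; lra. }
  assert (Hc12 : f' c1 <= f' c2) by (apply Hmono; lra).
  assert (0 <= (x - u) * (y - x) * (f' c2 - f' c1)).
  { apply Rmult_le_pos; [apply Rmult_le_pos|]; lra. }
  nra.
Qed.

Lemma Rpower_opp_chord (g u x y : R) :
  0 <= g -> 0 < u -> u < x < y ->
  Rpower x (- g) * (y - u) <= (y - x) * Rpower u (- g) + (x - u) * Rpower y (- g).
Proof.
  intros Hg Hu Hx.
  apply (chord_of_derive_nondecreasing (fun z => Rpower z (- g))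
           (fun z => - g * Rpower z (- g - 1))); [| |exact Hx].
  - intros c Hc. apply derivable_pt_lim_power; lra.
  - intros a b Ha Hab Hb.
    assert (Rpower b (- (g + 1)) <= Rpower a (- (g + 1)))
      by (apply Rpower_opp_antitone; lra).
    replace (- g - 1) with (- (g + 1)) by ring. nra.
Qed.

(* [(x^b - u^b)/(x^(b-1) - u^(b-1)) <= (y^b - u^b)/(y^(b-1) - u^(b-1))], with
   denominators cleared since they vanish for [b = 1]. *)
Lemma Rpower_cross_diff_le (b u x y : R) :
  1 <= b -> 0 < u -> u < x < y ->
  (Rpower x b - Rpower u b) * (Rpower y (b - 1) - Rpower u (b - 1))
  <= (Rpower x (b - 1) - Rpower u (b - 1)) * (Rpower y b - Rpower u b).
Proof.
  intros Hb Hu Hx.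
  rewrite <- (Rpower_pred_mul x b), <- (Rpower_pred_mul u b), <- (Rpower_pred_mul y b)
    by lra.
  pose proof (Rpower_opp_chord (b - 1) u x y ltac:(lra) Hu Hx) as Hchord.
  rewrite !Rpower_Ropp in Hchord.
  set (X := Rpower x (b - 1)) in *; set (U := Rpower u (b - 1)) in *;
    set (Y := Rpower y (b - 1)) in *.
  assert (HX : 0 < X) by apply Rpower_pos.
  assert (HU : 0 < U) by apply Rpower_pos.
  assert (HY : 0 < Y) by apply Rpower_pos.
  assert (Hcleared : U * Y * (y - u) <= X * Y * (y - x) + X * U * (x - u)).
  { apply (Rmult_le_compat_l (X * U * Y)) in Hchord;
      [|apply Rlt_le; now repeat apply Rmult_lt_0_compat].
    replace (X * U * Y * (/ X * (y - u))) with (U * Y * (y - u)) in Hchord by (field; lra).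
    replace (X * U * Y * ((y - x) * / U + (x - u) * / Y))
      with (X * Y * (y - x) + X * U * (x - u)) in Hchord by (field; lra).
    exact Hchord. }
  nra.
Qed.

Lemma Rpower_opp_pred_mul_le (d a b a' b' : R) :
  0 <= d -> 0 < a <= b -> 0 <= b' -> a * b' <= a' * b ->
  b' * Rpower b (- d - 1) <= a' * Rpower a (- d - 1).
Proof.
  intros Hd Hab Hb' Hcross.
  assert (Hanti : Rpower b (- d) <= Rpower a (- d)) by (apply Rpower_opp_antitone; lra).
  assert (Ha : 0 < Rpower a (- d)) by apply Rpower_pos.
  apply (Rmult_le_reg_r (a * b)); [nra|].
  replace (b' * Rpower b (- d - 1) * (a * b)) with (a * b' * Rpower b (- d))
    by (rewrite <- (Rpower_pred_mul b (- d)) by lra; ring).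
  replace (a' * Rpower a (- d - 1) * (a * b)) with (a' * b * Rpower a (- d))
    by (rewrite <- (Rpower_pred_mul a (- d)) by lra; ring).
  apply Rle_trans with (a * b' * Rpower a (- d)).
  - apply Rmult_le_compat_l; nra.
  - apply Rmult_le_compat_r; lra.
Qed.

Section Gaps.

Variables beta K : R.
Hypotheses (hbeta : 1 <= beta) (hK : 2 < K).

Definition lower_gap (x : R) : R := Rpower x beta - Rpower (x - K) beta - 2.
Definition upper_gap (x : R) : R := Rpower (x + 1) beta - Rpower (x - K) beta.
Definition lower_gap' (x : R) : R :=
  beta * Rpower x (beta - 1) - beta * Rpower (x - K) (beta - 1).
Definition upper_gap' (x : R) : R :=
  beta * Rpower (x + 1) (beta - 1) - beta * Rpower (x - K) (beta - 1).

Lemma derivable_pt_lim_lower_gap (x : R) :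
  K + 1 <= x -> derivable_pt_lim lower_gap x (lower_gap' x).
Proof.
  intros Hx. unfold lower_gap, lower_gap'.
  replace (beta * Rpower x (beta - 1) - beta * Rpower (x - K) (beta - 1))
    with (beta * Rpower x (beta - 1) - beta * Rpower (x - K) (beta - 1) * (1 - 0) - 0)
    by ring.
  apply derivable_pt_lim_minus; [apply derivable_pt_lim_minus|apply derivable_pt_lim_const].
  - apply derivable_pt_lim_power; lra.
  - apply (derivable_pt_lim_Rpower_comp (fun t => t - K)); [|lra].
    apply derivable_pt_lim_minus; [apply derivable_pt_lim_id|apply derivable_pt_lim_const].
Qed.

Lemma derivable_pt_lim_upper_gap (x : R) :
  K + 1 <= x -> derivable_pt_lim upper_gap x (upper_gap' x).
Proof.
  intros Hx. unfold upper_gap, upper_gap'.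
  replace (beta * Rpower (x + 1) (beta - 1) - beta * Rpower (x - K) (beta - 1))
    with (beta * Rpower (x + 1) (beta - 1) * (1 + 0)
          - beta * Rpower (x - K) (beta - 1) * (1 - 0))
    by ring.
  apply derivable_pt_lim_minus.
  - apply (derivable_pt_lim_Rpower_comp (fun t => t + 1)); [|lra].
    apply derivable_pt_lim_plus; [apply derivable_pt_lim_id|apply derivable_pt_lim_const].
  - apply (derivable_pt_lim_Rpower_comp (fun t => t - K)); [|lra].
    apply derivable_pt_lim_minus; [apply derivable_pt_lim_id|apply derivable_pt_lim_const].
Qed.

Lemma Rpower_pred_shifts_ordered (x : R) : K + 1 <= x ->
  1 <= Rpower (x - K) (beta - 1) /\ Rpower (x - K) (beta - 1) <= Rpower x (beta - 1)
  /\ Rpower x (beta - 1) <= Rpower (x + 1) (beta - 1).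
Proof.
  intros Hx. split; [|split; apply Rle_Rpower_l; lra].
  rewrite <- (Rpower_O (x - K)) at 1 by lra.
  apply Rle_Rpower; lra.
Qed.

Ltac expand_gaps x :=
  destruct (Rpower_pred_shifts_ordered x ltac:(assumption)) as [HU [HUX HXY]];
  unfold lower_gap, upper_gap, lower_gap', upper_gap' in *;
  rewrite <- ?(Rpower_pred_mul x beta), <- ?(Rpower_pred_mul (x - K) beta),
    <- ?(Rpower_pred_mul (x + 1) beta) by lra.

(* [lower_gap x >= K (x-K)^(β-1) - 2 >= K - 2]. *)
Lemma lower_gap_pos (x : R) : K + 1 <= x -> 0 < lower_gap x.
Proof. intros Hx. expand_gaps x. nra. Qed.

Lemma lower_gap_le_upper_gap (x : R) : K + 1 <= x -> lower_gap x <= upper_gap x.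
Proof. intros Hx. expand_gaps x. nra. Qed.

Lemma upper_gap'_ge0 (x : R) : K + 1 <= x -> 0 <= upper_gap' x.
Proof. intros Hx. expand_gaps x. nra. Qed.

Lemma gap_cross_le (x : R) : K + 1 <= x ->
  lower_gap x * upper_gap' x <= lower_gap' x * upper_gap x.
Proof.
  intros Hx.
  pose proof (Rpower_cross_diff_le beta (x - K) x (x + 1) hbeta ltac:(lra) ltac:(lra))
    as Hcross.
  expand_gaps x.
  rewrite <- (Rpower_pred_mul x beta), <- (Rpower_pred_mul (x - K) beta),
    <- (Rpower_pred_mul (x + 1) beta) in Hcross by lra.
  apply (Rmult_le_compat_l beta) in Hcross; [|lra].
  nra.
Qed.

Variable delta : R.
Hypothesis hdelta : 0 <= delta.

Definition Delta (x : R) : R :=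
  Rpower (lower_gap x) (- delta) - Rpower (upper_gap x) (- delta).

Definition Delta' (x : R) : R :=
  - delta * Rpower (lower_gap x) (- delta - 1) * lower_gap' x
  - - delta * Rpower (upper_gap x) (- delta - 1) * upper_gap' x.

Lemma derivable_pt_lim_Delta (x : R) :
  K + 1 <= x -> derivable_pt_lim Delta x (Delta' x).
Proof.
  intros Hx. unfold Delta, Delta'.
  apply derivable_pt_lim_minus; apply derivable_pt_lim_Rpower_comp.
  - now apply derivable_pt_lim_lower_gap.
  - now apply lower_gap_pos.
  - now apply derivable_pt_lim_upper_gap.
  - pose proof (lower_gap_pos x Hx); pose proof (lower_gap_le_upper_gap x Hx); lra.
Qed.

Lemma Delta'_nonpos (x : R) : K + 1 <= x -> Delta' x <= 0.
Proof.
  intros Hx.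
  pose proof (Rpower_opp_pred_mul_le delta (lower_gap x) (upper_gap x)
    (lower_gap' x) (upper_gap' x) hdelta
    (conj (lower_gap_pos x Hx) (lower_gap_le_upper_gap x Hx))
    (upper_gap'_ge0 x Hx) (gap_cross_le x Hx)).
  unfold Delta'. nra.
Qed.

Lemma Delta_antitone (x y : R) : K + 1 <= x <= y -> Delta y <= Delta x.
Proof.
  apply (antitone_of_derive_nonpos Delta Delta').
  - exact derivable_pt_lim_Delta.
  - exact Delta'_nonpos.
Qed.

End Gaps.

Theorem lemma3 (delta beta : R) (k : nat)
  (hdelta : 0 < delta) (hbeta : 1 <= beta) (hk : (3 <= k)%nat) :
  forall n m : nat, (k + 1 <= n)%nat -> (n <= m)%nat ->
    Delta_kn delta beta k m <= Delta_kn delta beta k n.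
Proof.
  intros n m Hn Hnm.
  assert (HK : 2 < INR k) by (apply lt_INR in hk; simpl in hk; lra).
  assert (Hn' : INR k + 1 <= INR n) by (rewrite <- S_INR; apply le_INR; lia).
  apply (Delta_antitone beta (INR k) hbeta HK delta (Rlt_le _ _ hdelta)).
  split; [exact Hn'|now apply le_INR].
Qed.
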